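(* Every finite solvable group all of whose Sylow subgroups are abelian is an IYB group, i.e. it is isomorphic to the multiplicative group $(B,\cdot)$ of some finite left brace $(B,+,\cdot)$.
   Context: A left brace is a set $B$ with two binary operations $+$ and $\cdot$ such that $(B,+)$ is an abelian group, $(B,\cdot)$ is a group, and $a\cdot(b+c)+a=a\cdot b+a\cdot c$ for all $a,b,c\in B$. A group is called an IYB group if it is isomorphic to the multiplicative group of a finite left brace. *)

From mathcomp Require Import all_boot all_fingroup all_solvable.
Set Implicit Arguments. Unset Strict Implicit. Unset Printing Implicit Defensive.

Record left_brace (T : finType) := LeftBrace {
  badd : T -> T -> T; bzero : T; bneg : T -> T;
  bmul : T -> T -> T; bone : T; binv : T -> T;
  baddA : associative badd;
  baddC : commutative badd;
  badd0 : left_id bzero badd;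
  baddN : left_inverse bzero bneg badd;
  bmulA : associative bmul;
  bmul1 : left_id bone bmul;
  bmulV : left_inverse bone binv bmul;
  bbrace : forall a b c : T,
      badd (bmul a (badd b c)) a = badd (bmul a b) (bmul a c)
}.

Definition IYB_group (gT : finGroupType) (G : {group gT}) : Prop :=
  exists (T : finType) (B : left_brace T) (f : T -> gT),
    [/\ injective f, f @: [set: T] = G &
        forall a b : T, f (bmul B a b) = (f a * f b)%g].

(* Induction on #|G|.  If G != 1, let G^`(k) be the last nontrivial term of the derived series
   and p a prime dividing its order; A := 'O_p(G^`(k)) is a nontrivial abelian normal subgroup.
   For an abelian Sylow p-subgroup P, Burnside's fusion argument evaluates the transfer and gives
   P :&: G^`(1) = [~: P, 'N_G(P)], a direct factor of P by coprime action of a complement of P in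
   'N_G(P).  Iterating along the derived series, A = P :&: G^`(k) is a direct factor of P, so
   Gaschutz's theorem yields a complement H of A in G.  H satisfies the hypotheses, hence is the
   multiplicative group of a brace B, and G = A ><| H is that of the brace on A * B with
   componentwise addition and product (a, s) (b, t) = (a * b ^ (f s)^-1, s t). *)

From mathcomp Require Import all_boot all_fingroup all_solvable ssralg.

Set Implicit Arguments. Unset Strict Implicit. Unset Printing Implicit Defensive.
Import GRing.Theory FiniteModule.
Local Open Scope group_scope.

Section SemidirectBrace.

Variables (gT : finGroupType) (A H : {group gT}).
Hypotheses (nAH : H \subset 'N(A)) (abA : abelian A).
Variables (T : finType) (B : left_brace T) (f : T -> gT).
Hypotheses (fH : forall t, f t \in H) (fM : forall s t, f (bmul B s t) = f s * f t).

Let f1 : f (bone B) = 1.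
Proof. by apply: (mulgI (f (bone B))); rewrite -fM bmul1 mulg1. Qed.

Let subg_sgvalM (a b : [subg A]) : sgval (a * b) = sgval a * sgval b.
Proof. by rewrite sgvalM ?inE. Qed.

Let sgval_inj : injective (@sgval gT A).
Proof. exact: val_inj. Qed.

Let subgC (a b : [subg A]) : a * b = b * a.
Proof. by apply: sgval_inj; rewrite !subg_sgvalM; apply: (centsP abA); apply: subgP. Qed.

Local Notation carrier := ([subg A] * T)%type.

(* Chosen so that [f t * a = sdb_act t a * f t], which makes [sdb_val] multiplicative. *)
Definition sdb_act (t : T) (a : [subg A]) : [subg A] := subg A (sgval a ^ (f t)^-1).

Let sdb_actE t a : sgval (sdb_act t a) = sgval a ^ (f t)^-1.
Proof. by rewrite subgK // memJ_norm ?subgP // groupV (subsetP nAH). Qed.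

Let sdb_actM t a b : sdb_act t (a * b) = sdb_act t a * sdb_act t b.
Proof. by apply: sgval_inj; rewrite subg_sgvalM !sdb_actE subg_sgvalM conjMg. Qed.

Let sdb_act_bmul s t a : sdb_act s (sdb_act t a) = sdb_act (bmul B s t) a.
Proof. by apply: sgval_inj; rewrite !sdb_actE -conjgM fM invMg. Qed.

Let sdb_act_bone a : sdb_act (bone B) a = a.
Proof. by apply: sgval_inj; rewrite sdb_actE f1 invg1 conjg1. Qed.

Let sdb_act1 t : sdb_act t 1 = 1.
Proof. by apply: sgval_inj; rewrite sdb_actE conj1g. Qed.

Definition sdb_add (x y : carrier) := (x.1 * y.1, badd B x.2 y.2).
Definition sdb_opp (x : carrier) := (x.1^-1, bneg B x.2).
Definition sdb_mul (x y : carrier) := (x.1 * sdb_act x.2 y.1, bmul B x.2 y.2).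
Definition sdb_inv (x : carrier) := (sdb_act (binv B x.2) x.1^-1, binv B x.2).

Lemma sdb_addA : associative sdb_add.
Proof. by move=> [a s] [b t] [c u]; rewrite /sdb_add /= mulgA baddA. Qed.

Lemma sdb_addC : commutative sdb_add.
Proof. by move=> [a s] [b t]; rewrite /sdb_add /= subgC baddC. Qed.

Lemma sdb_add0 : left_id (1, bzero B) sdb_add.
Proof. by move=> [a s]; rewrite /sdb_add /= mul1g badd0. Qed.

Lemma sdb_addN : left_inverse (1, bzero B) sdb_opp sdb_add.
Proof. by move=> [a s]; rewrite /sdb_add /= mulVg baddN. Qed.

Lemma sdb_mulA : associative sdb_mul.
Proof.
by move=> [a s] [b t] [c u]; rewrite /sdb_mul /= sdb_actM sdb_act_bmul !mulgA bmulA.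
Qed.

Lemma sdb_mul1 : left_id (1, bone B) sdb_mul.
Proof. by move=> [a s]; rewrite /sdb_mul /= sdb_act_bone mul1g bmul1. Qed.

Lemma sdb_mulV : left_inverse (1, bone B) sdb_inv sdb_mul.
Proof. by move=> [a s]; rewrite /sdb_mul /sdb_inv /= -sdb_actM mulVg sdb_act1 bmulV. Qed.

Lemma sdb_brace (x y z : carrier) :
  sdb_add (sdb_mul x (sdb_add y z)) x = sdb_add (sdb_mul x y) (sdb_mul x z).
Proof.
case: x y z => [a s] [b t] [c u]; rewrite /sdb_mul /sdb_add /= bbrace sdb_actM.
by congr (_, _); rewrite -!mulgA; congr (_ * _); rewrite [sdb_act s c * a]subgC !mulgA.
Qed.

Definition sdprod_brace : left_brace carrier :=
  LeftBrace sdb_addA sdb_addC sdb_add0 sdb_addN sdb_mulA sdb_mul1 sdb_mulV sdb_brace.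

Definition sdb_val (x : carrier) : gT := sgval x.1 * f x.2.

Lemma sdb_valM x y : sdb_val (sdb_mul x y) = sdb_val x * sdb_val y.
Proof.
case: x y => [a s] [b t]; rewrite /sdb_val /sdb_mul subg_sgvalM sdb_actE fM.
by rewrite conjgE invgK !mulgA mulgKV.
Qed.

Lemma sdb_val_inj : A :&: H = 1 -> injective f -> injective sdb_val.
Proof.
move=> tiAH f_inj [a s] [b t]; rewrite /sdb_val /= => eq_ab.
have eq_ba : (sgval b)^-1 * sgval a = f t * (f s)^-1.
  by rewrite -(mulgK (f s) (sgval a)) eq_ab -mulgA mulKg.
have : (sgval b)^-1 * sgval a \in A :&: H.
  by rewrite inE groupM ?groupV ?subgP //= eq_ba groupM ?groupV ?fH.
rewrite tiAH => /set1P/eqP; rewrite -eq_mulVg1 => /eqP/sgval_inj eq_b_a; subst b.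
by congr (_, _); apply/f_inj/(mulgI (sgval a)).
Qed.

Lemma sdb_val_im : f @: [set: T] = H -> sdb_val @: [set: carrier] = A * H.
Proof.
move=> f_im; apply/setP=> x; apply/imsetP/mulsgP => [[[a s] _ ->] | [y z Ay Hz ->]].
  by exists (sgval a) (f s); rewrite ?subgP ?fH.
have : z \in f @: [set: T] by rewrite f_im.
by case/imsetP=> t _ ->; exists (subg A y, t); rewrite ?inE // /sdb_val /= subgK.
Qed.

End SemidirectBrace.

Lemma IYB_trivial (gT : finGroupType) (G : {group gT}) : G :=: 1 -> IYB_group G.
Proof.
move=> G1; have tt_eq (x y : unit) : x = y by case: x; case: y.
pose unit_brace := @LeftBrace unit (fun _ _ => tt) tt (fun _ => tt) (fun _ _ => tt) tt
  (fun _ => tt) (fun _ _ _ => tt_eq _ _) (fun _ _ => tt_eq _ _) (fun _ => tt_eq _ _)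
  (fun _ => tt_eq _ _) (fun _ _ _ => tt_eq _ _) (fun _ => tt_eq _ _) (fun _ => tt_eq _ _)
  (fun _ _ _ => tt_eq _ _).
exists unit, unit_brace, (fun _ => 1); split=> [[] [] // | | _ _]; last by rewrite mulg1.
rewrite G1; apply/setP=> x; rewrite !inE.
by apply/imsetP/idP => [[? _ ->] | /eqP ->] //; exists tt.
Qed.

Lemma IYB_sdprod (gT : finGroupType) (G A H : {group gT}) :
  A <| G -> abelian A -> A :&: H = 1 -> A * H = G -> IYB_group H -> IYB_group G.
Proof.
move=> nsAG abA tiAH defG [T [B [f [f_inj f_im fM]]]].
have nAH : H \subset 'N(A).
  by apply: subset_trans (normal_norm nsAG); rewrite -defG mulG_subr.
have fH t : f t \in H by rewrite -f_im imset_f ?inE.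
exists ([subg A] * T)%type, (sdprod_brace nAH abA fH fM), (@sdb_val _ A _ f); split.
- exact: sdb_val_inj.
- by rewrite (sdb_val_im A fH f_im).
- exact: (sdb_valM nAH fH fM).
Qed.

Lemma commg_abelian_mulg (gT : finGroupType) (P K : {group gT}) :
  abelian P -> [~: P, P * K] = [~: P, K].
Proof.
move=> abP; apply/eqP; rewrite eqEsubset (commgS P (mulG_subr P K)) andbT gen_subG.
apply/subsetP=> _ /imset2P[x _ Px /mulsgP[y k Py Kk ->] ->].
rewrite commgMJ; have /commgP/eqP-> : commute x y by apply: (centsP abP).
by rewrite conj1g mulg1 mem_commg.
Qed.

Lemma coprime_abelian_commg_cent_dprod (gT : finGroupType) (P K : {group gT}) :
  K \subset 'N(P) -> coprime #|P| #|K| -> abelian P -> [~: P, K] \x 'C_P(K) = P.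
Proof.
move=> nPK coPK abP; have sRP : [~: P, K] \subset P by rewrite commg_subl.
have quo_cent : 'C_P(K) / [~: P, K] = P / [~: P, K].
  rewrite (coprime_quotient_cent sRP (commg_normr K P) coPK (abelian_sol abP)).
  by apply/setIidPl; apply: quotient_cents2r.
rewrite dprodE ?(subset_trans (subsetIl P _) (subset_trans abP (centS sRP))) //.
  apply/eqP; rewrite eqEsubset mul_subG ?subsetIl //=.
  by rewrite -quotientSK ?commg_norml // quo_cent.
by rewrite setIA (setIidPl sRP) coprime_abel_cent_TI.
Qed.

Section AbelianSylow.

Variables (gT : finGroupType) (G P : {group gT}) (p : nat).
Hypotheses (sylP : p.-Sylow(G) P) (abP : abelian P).

Let sPG : P \subset G := pHall_sub sylP.

Lemma abelian_Sylow_fusion u x : u \in P -> x \in G -> u ^ x \in P ->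
  exists2 a, a \in 'N_G(P) & u ^ x = u ^ a.
Proof.
move=> Pu Gx Pux; pose C := 'C_G[u ^ x].
have sPcent1 v : v \in P -> P \subset 'C[v] by move=> Pv; rewrite sub_cent1 (subsetP abP).
have sCG : C \subset G := subsetIl _ _.
have sylPC : p.-Sylow(C) P.
  by apply: pHall_subl sylP; rewrite // subsetI sPG sPcent1.
have sylPxC : p.-Sylow(C) (P :^ x)%G.
  apply: pHall_subl sCG _; last by rewrite pHallJ.
  by rewrite subsetI -{1}(conjGid Gx) conjSg sPG /= cent1J conjSg sPcent1.
have [c /setIP[Gc cuc] defPx] := Sylow_trans sylPC sylPxC.
exists (x * c^-1).
  by rewrite inE groupM ?groupV //; apply/normP; rewrite conjsgM /= defPx conjsgK.
by rewrite conjgM [_ ^ c^-1]conjgE invgK mulgA (cent1P cuc) mulgK.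
Qed.

Let R := [~: P, 'N_G(P)].
Let nRP : P \subset 'N(R) := commg_norml P _.
Let alpha := restrm nRP (coset R).
Let abelA : abelian (alpha @* P).
Proof. by rewrite restrm_quotientE // quotient_abelian. Qed.

(* Each term of the cycle expansion of the transfer is a conjugate of a power of g lying in P;
   by fusion it is conjugate under 'N_G(P), so it equals that power modulo [P, 'N_G(P)]. *)
Lemma transfer_abelian_Sylow g : g \in P ->
  transfer G abelA g = (fmod abelA (alpha g) *+ #|G : P|)%R.
Proof.
move=> Pg; have Gg : g \in G := subsetP sPG g Pg.
have trX := transversalP (rcosets_cycle_partition sPG Gg).
rewrite (transfer_cycle_expansion sPG abelA Gg trX).
rewrite -(sum_index_rcosets_cycle sPG Gg trX) -sumrMnr.
apply: eq_bigr => x /(subsetP (transversal_sub trX)) Gx.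
set m := #|<[g]> : P :* x|.
have Pgmx : g ^+ m ^ x^-1 \in P.
  have := mulg_exp_card_rcosets P g x; rewrite -/m mem_rcoset.
  by rewrite conjgE invgK mulgA.
have [a Na ->] := abelian_Sylow_fusion (groupX m Pg) (groupVr Gx) Pgmx.
change (fmod abelA (coset R (g ^+ m ^ a)) = fmod abelA (alpha g) *+ m)%R.
rewrite conjg_mulR coset_kerr; last by rewrite mem_commg ?groupX.
by rewrite morphX ?(subsetP nRP) // fmodX //; apply: (mem_morphim alpha).
Qed.

Lemma abelian_Sylow_focal : P :&: G^`(1) \subset [~: P, 'N_G(P)].
Proof.
apply/subsetP => g /setIP[Pg G'g].
have trG' : transfer G abelA g = 0%R.
  have : transfer_morphism G abelA g \in transfer_morphism G abelA @* G^`(1).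
    by rewrite mem_morphim // (subsetP (der_sub 1 G)).
  rewrite morphim_der // (derG1P _) ?inE => [/eqP //|].
  by apply/centsP => a _ b _; apply: addrC.
have alpha_P : alpha g \in alpha @* P by rewrite mem_morphim.
have nRg : g \in 'N(R) := subsetP nRP g Pg.
have gkR : g ^+ #|G : P| \in R.
  apply: coset_idr; first by rewrite groupX.
  have := fmodK abelA (groupX #|G : P| alpha_P).
  by rewrite fmodX // -transfer_abelian_Sylow // trG' fmval0 /= morphX.
have co_g : coprime #|<[g]>| #|G : P|.
  have [_ pP p'iP] := and3P sylP.
  by apply: (pnat_coprime _ p'iP); apply: pgroupS pP; rewrite cycle_subG.
by rewrite -(expgK co_g (cycle_id g)) groupX.
Qed.

Lemma abelian_Sylow_der1_dprod : exists C : {group gT}, (P :&: G^`(1)) \x C = P.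
Proof.
have sPN : P \subset 'N_G(P) by rewrite subsetI sPG normG.
have sylPN : p.-Sylow('N_G(P)) P := pHall_subl sPN (subsetIl _ _) sylP.
have nsPN : P <| 'N_G(P) by rewrite /normal sPN subsetIr.
have [K /complP[tiPK defN]] := splitsP (SchurZassenhaus_split (pHall_Hall sylPN) nsPN).
have nPK : K \subset 'N(P).
  by apply: subset_trans (subsetIr G _); rewrite -defN mulG_subr.
have coPK : coprime #|P| #|K|.
  have defPK : P ><| K = 'N_G(P) by rewrite sdprodE.
  by rewrite (coprime_sdprod_Hall_l defPK) (pHall_Hall sylPN).
have <- : [~: P, K] = P :&: G^`(1).
  rewrite -(commg_abelian_mulg _ abP) defN; apply/eqP.
  rewrite eqEsubset abelian_Sylow_focal andbT subsetI commg_subl subsetIr.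
  by rewrite derg1 commgSS ?subsetIl.
by exists 'C_P(K)%G; apply: coprime_abelian_commg_cent_dprod.
Qed.

End AbelianSylow.

Lemma dprod_factor_trans (gT : finGroupType) (A B C1 C2 P : {group gT}) :
  A \x C1 = B -> B \x C2 = P -> A \x (C1 <*> C2) = P.
Proof.
move=> defB defP; have [_ defAC1 _ _] := dprodP defB.
have [_ _ cBC2 tiBC2] := dprodP defP.
have sC1B : C1 \subset B by rewrite -defAC1 mulG_subr.
rewrite -dprodEY ?(subset_trans cBC2 (centS sC1B)) ?dprodA ?defB //.
by apply/trivgP; rewrite -tiBC2 setSI.
Qed.

Lemma abelian_Sylow_der_dprod (gT : finGroupType) (G P : {group gT}) p i :
  p.-Sylow(G) P -> abelian P -> exists C : {group gT}, (P :&: G^`(i)) \x C = P.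
Proof.
move=> sylP abP; elim: i => [|i [C2 defP]].
  by exists 1%G; rewrite derg0 (setIidPl (pHall_sub sylP)) dprodg1.
have sylPi : p.-Sylow(G^`(i)) (P :&: G^`(i)).
  by rewrite setIC; apply: Sylow_setI_normal (der_normal i G) sylP.
have [C1 defPi] := abelian_Sylow_der1_dprod sylPi (abelianS (subsetIl _ _) abP).
rewrite -setIA (setIidPr (der_subS i G)) in defPi.
by exists (C1 <*> C2)%G; apply: dprod_factor_trans defPi defP.
Qed.

Definition abelian_Sylows (gT : finGroupType) (G : {set gT}) :=
  forall p (P : {group gT}), p.-Sylow(G) P -> abelian P.

Lemma abelian_SylowsS (gT : finGroupType) (G H : {group gT}) :
  H \subset G -> abelian_Sylows G -> abelian_Sylows H.
Proof.
move=> sHG abS q Q sylQ.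
have [P sylP sQP] := Sylow_superset (subset_trans (pHall_sub sylQ) sHG) (pHall_pgroup sylQ).
exact: abelianS sQP (abS q P sylP).
Qed.

Lemma abelian_der_pcore_splits (gT : finGroupType) (G : {group gT}) (p k : nat) :
  abelian (G^`(k)) -> abelian_Sylows G -> [splits G, over 'O_p(G^`(k))].
Proof.
move=> abD abS; have [P sylP] := Sylow_exists p G.
have sylPD : p.-Sylow(G^`(k)) (G^`(k) :&: P) := Sylow_setI_normal (der_normal k G) sylP.
have hallO : p.-Hall(G^`(k)) 'O_p(G^`(k)) := nilpotent_pcore_Hall p (abelian_nil abD).
have defO : 'O_p(G^`(k)) = G^`(k) :&: P.
  apply/eqP; rewrite eqEcard (pcore_sub_Hall sylPD) (card_Hall hallO) /=.
  by rewrite (card_Hall sylPD).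
have nsOG : 'O_p(G^`(k)) <| G := char_normal_trans (pcore_char p _) (der_normal k G).
have [_ pP p'iP] := and3P sylP.
have coO : coprime #|'O_p(G^`(k))| #|G : P| := pnat_coprime (pcore_pgroup p _) p'iP.
rewrite (Gaschutz_split nsOG _ (pHall_sub sylP) (abelianS (pcore_sub p _) abD) coO).
  have [C defP] := abelian_Sylow_der_dprod k sylP (abS p P sylP).
  have [_ defOC _ tiOC] := dprodP defP.
  by apply/splitsP; exists C; apply/complP; rewrite /= defO [G^`(k) :&: P]setIC tiOC defOC.
by rewrite /= defO subsetIr.
Qed.

Lemma solvable_abelian_der (gT : finGroupType) (G : {group gT}) :
  solvable G -> G :!=: 1 -> exists k, abelian (G^`(k)) /\ G^`(k) :!=: 1.
Proof.
move=> solG ntG.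
have exP : exists n, G^`(n) == 1 by case/derivedP: solG => n /eqP; exists n.
case: (ex_minnP exP) => [[|k] /eqP Gk1 mink].
  by rewrite derg0 in Gk1; rewrite Gk1 eqxx in ntG.
exists k; split; first exact/derG1P.
by apply/eqP => /eqP/mink; rewrite ltnn.
Qed.

Lemma abelian_Sylows_normal_complement (gT : finGroupType) (G : {group gT}) :
  solvable G -> abelian_Sylows G -> G :!=: 1 ->
  exists A H : {group gT}, [/\ A <| G, abelian A, A :!=: 1, A :&: H = 1 & A * H = G].
Proof.
move=> solG abS ntG; have [k [abD ntD]] := solvable_abelian_der solG ntG.
have [D1 | [p pr_p pD]] := trivgVpdiv (G^`(k)); first by rewrite D1 eqxx in ntD.
have [H /complP[tiAH defAH]] := splitsP (abelian_der_pcore_splits p abD abS).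
exists 'O_p(G^`(k))%G, H; split=> //.
- exact: char_normal_trans (pcore_char p _) (der_normal k G).
- exact: abelianS (pcore_sub p _) abD.
rewrite -cardG_gt1 (card_Hall (nilpotent_pcore_Hall p (abelian_nil abD))).
by rewrite p_part_gt1 mem_primes pr_p cardG_gt0.
Qed.

Theorem theorem2p1 (gT : finGroupType) (G : {group gT}) :
  solvable G ->
  (forall (p : nat) (P : {group gT}), (p.-Sylow(G) P)%g -> abelian P) ->
  IYB_group G.
Proof.
elim: {G}_.+1 {-2}G (ltnSn #|G|) => // n IHn G /ltnSE leGn solG abS.
have [G1 | ntG] := eqVneq (G :> {set gT}) 1; first exact: IYB_trivial.
have [A [H [nsAG abA ntA tiAH defAH]]] := abelian_Sylows_normal_complement solG abS ntG.
have sHG : H \subset G by rewrite -defAH mulG_subr.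
apply: (IYB_sdprod nsAG abA tiAH defAH).
apply: IHn (solvableS sHG solG) (abelian_SylowsS sHG abS).
by apply: leq_trans leGn; rewrite -defAH (TI_cardMg tiAH) ltn_Pmull ?cardG_gt1.
Qed.
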